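(* Fix $\epsilon>0$ and let $Q=\{(x,y)\in\mathbb R^2: x>y+\epsilon\}$ (equivalently $Q=\{(x,y):(y,x)\notin P\}$ where $(x,y)\in P\iff x+\epsilon\geq y$). Then there is no family $\mathcal V$ (of any cardinality) of continuous functions $v:\mathbb R\to\mathbb R$ such that for all $x,y\in\mathbb R$: $(x,y)\in Q$ if and only if $v(x)\geq v(y)$ for all $v\in\mathcal V$ and $v(x)>v(y)$ for some $v\in\mathcal V$. In other words, $P$ admits no continuous embedding into $\mathbb R^I$ with the Pareto order, for any index set $I$.
   Context: The Pareto order on $\mathbb R^I$: $(x_\alpha)\succ(y_\alpha)$ iff $x_\alpha\geq y_\alpha$ for all $\alpha\in I$ and $x_\alpha>y_\alpha$ for some $\alpha\in I$. *)

From Stdlib Require Import Reals.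
Open Scope R_scope.

Definition pareto_gt {I : Type} (x y : I -> R) : Prop :=
  (forall a : I, x a >= y a) /\ (exists a : I, x a > y a).

Definition Qrel (eps : R) (x y : R) : Prop := x > y + eps.

From Stdlib Require Import Reals Lra FunctionalExtensionality.
Open Scope R_scope.

(* Continuity pushes the Pareto inequalities from the points (x + eps + h, x),
   h > 0, which lie in Q, to the boundary point (x + eps, x), which does not;
   so every v takes equal values at x + eps and x.  Then (2 eps, 0) and
   (2 eps, eps) have the same Pareto comparison, although only the first lies
   in Q. *)

Lemma continuity_pt_ge_right (f : R -> R) (c x0 : R) :
  continuity_pt f x0 -> (forall h, 0 < h -> f (x0 + h) >= c) -> f x0 >= c.
Proof.
  intros Hf Hright.
  destruct (Rge_dec (f x0) c) as [Hge | Hlt]; [exact Hge |].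
  destruct (Hf (c - f x0)) as [delta [Hdelta Hclose]]; [lra |].
  assert (Hnear : R_dist (f (x0 + delta / 2)) (f x0) < c - f x0).
  { apply Hclose; split.
    - split; [exact I | lra].
    - simpl; unfold R_dist.
      replace (x0 + delta / 2 - x0) with (delta / 2) by ring.
      rewrite Rabs_right; lra. }
  unfold R_dist in Hnear; apply Rabs_def2 in Hnear.
  specialize (Hright (delta / 2)); lra.
Qed.

Lemma pareto_ge_not_gt_eq {I : Type} (x y : I -> R) :
  (forall a, x a >= y a) -> ~ pareto_gt x y -> x = y.
Proof.
  intros Hge Hngt; apply functional_extensionality; intro a.
  destruct (Rgt_dec (x a) (y a)) as [Hgt | Hle].
  - exfalso; apply Hngt; split; [exact Hge | now exists a].
  - specialize (Hge a); lra.
Qed.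

Section ContinuousParetoRepresentation.

Variables (eps : R) (I : Type) (v : I -> R -> R).
Hypothesis v_continuous : forall a, continuity (v a).
Hypothesis v_represents_Q :
  forall x y, Qrel eps x y <-> pareto_gt (fun a => v a x) (fun a => v a y).

Lemma represent_shift_ge (x : R) (a : I) : v a (x + eps) >= v a x.
Proof.
  apply continuity_pt_ge_right; [apply v_continuous |].
  intros h Hh.
  assert (HQ : Qrel eps (x + eps + h) x) by (unfold Qrel; lra).
  apply v_represents_Q in HQ as [Hge _]; apply Hge.
Qed.

Lemma represent_shift_eq (x : R) :
  (fun a => v a (x + eps)) = (fun a => v a x).
Proof.
  apply pareto_ge_not_gt_eq; [exact (represent_shift_ge x) |].
  intro Hgt; apply v_represents_Q in Hgt; unfold Qrel in Hgt; lra.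
Qed.

End ContinuousParetoRepresentation.

Theorem mainTheorem7 (eps : R) (Heps : 0 < eps) :
  ~ exists (I : Type) (v : I -> R -> R),
      (forall a : I, continuity (v a)) /\
      (forall x y : R, Qrel eps x y <-> pareto_gt (fun a => v a x) (fun a => v a y)).
Proof.
  intros [I [v [Hcont Hrep]]].
  assert (Hshift := represent_shift_eq eps I v Hcont Hrep 0).
  rewrite Rplus_0_l in Hshift.
  assert (HQ : Qrel eps (2 * eps) 0) by (unfold Qrel; lra).
  apply Hrep in HQ; rewrite <- Hshift, <- Hrep in HQ.
  unfold Qrel in HQ; lra.
Qed.
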